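(* Let $k\ge 3$. Then $\chi_\rho(S^2_{P_k})=3$ if $k=3$, and $\chi_\rho(S^2_{P_k})=4$ if $k\ge 4$.
   Context: $P_k$ is the path with vertex set $[k]=\{0,\dots,k-1\}$ and edges $\{i,i+1\}$, $0\le i\le k-2$. For a graph $G$ with vertex set $[k]$ and $n\ge 1$, the generalized Sierpi\'nski graph $S^n_G$ has vertex set $[k]^n$, and $u=u_1\cdots u_n$, $v=v_1\cdots v_n$ are adjacent iff there is $i$ with: $u_j=v_j$ for $j<i$; $u_i\neq v_i$ and $u_iv_i\in E(G)$; and $u_j=v_i$, $v_j=u_i$ for all $j>i$. A packing $c$-coloring of a graph $X$ is a map $f:V(X)\to\{1,\dots,c\}$ such that any two distinct vertices $u,v$ with $f(u)=f(v)=i$ satisfy $d_X(u,v)>i$; the packing chromatic number $\chi_\rho(X)$ is the least such $c$. *)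

From mathcomp Require Import all_boot.
Set Implicit Arguments. Unset Strict Implicit. Unset Printing Implicit Defensive.

Definition path_graph (k : nat) : rel 'I_k :=
  fun i j => (i.+1 == j :> nat) || (j.+1 == i :> nat).

(* Generalized Sierpinski graph S^n_G for G on 'I_k; vertices are words
   u = u_0 ... u_{n-1} (0-based indexing of positions). *)
Definition sierpinski_adj (k n : nat) (G : rel 'I_k) :
    rel {ffun 'I_n -> 'I_k} :=
  fun u v => [exists i : 'I_n,
     [&& [forall j : 'I_n, (j < i) ==> (u j == v j)],
         u i != v i, G (u i) (v i) &
         [forall j : 'I_n, (i < j) ==> ((u j == v i) && (v j == u i))]]].

Definition dist_le (T : finType) (e : rel T) (i : nat) (u v : T) : Prop :=
  exists p : seq T, [/\ path e u p, last u p = v & size p <= i].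

Definition packing_coloring (T : finType) (e : rel T) (c : nat) (f : T -> nat)
  : Prop :=
  (forall x, 1 <= f x <= c) /\
  (forall x y, x != y -> f x = f y -> ~ dist_le e (f x) x y).

Definition packing_colorable (T : finType) (e : rel T) (c : nat) : Prop :=
  exists f : T -> nat, packing_coloring e c f.

Definition packing_chromatic_number_is (T : finType) (e : rel T) (c : nat)
  : Prop :=
  packing_colorable e c /\ forall c', packing_colorable e c' -> c <= c'.

From mathcomp Require Import all_boot.
From mathcomp Require Import zify.

Set Implicit Arguments.
Unset Strict Implicit.
Unset Printing Implicit Defensive.

(* S^2_{P_k} is a tree: writing its vertices as pairs (a, b), each copy
   {a} x [k] is a path, and consecutive copies are joined by the bridge
   (a, a+1) -- (a+1, a).  Colouring every copy like a path and recolouring a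
   few diagonal vertices gives packing colourings with 4 colours, and with 3
   when k = 3.
   Conversely, (0,2), (0,1), (1,0), (1,1) is a path on four vertices, which has
   no packing 2-colouring.  For k >= 4, the adjacent vertices (1,2) and (2,1)
   have degree 3, so a packing 3-colouring gives them the colours 2 and 3;
   their neighbours (1,1) and (2,2) are then coloured 1, and the leaves (1,0)
   and (2,3) must repeat the colour of (2,1), resp. (1,2), at distance 3, so
   both of these are 2, a contradiction. *)

Section PackingColoring.

Variables (T : finType) (e : rel T).

Lemma dist_le_edge x y : e x y -> dist_le e 1 x y.
Proof. by move=> exy; exists [:: y]; rewrite /= exy. Qed.

Lemma dist_le_cons i x y z : e x y -> dist_le e i y z -> dist_le e i.+1 x z.
Proof. by move=> exy [p [py <- ?]]; exists (y :: p); rewrite /= exy py. Qed.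

Lemma dist_le_widen i j x y : i <= j -> dist_le e i x y -> dist_le e j x y.
Proof. by move=> ij [p [? ? lep]]; exists p; split=> //; apply: leq_trans ij. Qed.

Lemma packing_chromatic_number_is_intro c :
  packing_colorable e c -> ~ packing_colorable e c.-1 ->
  packing_chromatic_number_is e c.
Proof.
move=> col_c not_col; split=> // c' [f [f_range f_sep]].
rewrite leqNgt; apply/negP => lt_c'c; apply: not_col; exists f; split=> // x.
by have := f_range x; lia.
Qed.

Hypotheses (e_irr : irreflexive e) (e_sym : symmetric e).
Variable f : T -> nat.

Lemma packing_coloring_lt_dist c x y d :
  packing_coloring e c f -> x != y -> dist_le e d x y -> f x = f y -> f x < d.
Proof.
case=> _ f_sep xy dxy fxy; rewrite ltnNge; apply/negP => /dist_le_widen.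
by move/(_ _ _ dxy); apply: f_sep.
Qed.

Lemma packing_coloring_adj_neq c x y : packing_coloring e c f -> e x y -> f x != f y.
Proof.
move=> f_col exy; have xy : x != y by apply: contraTneq exy => ->; rewrite e_irr.
apply/eqP => /(packing_coloring_lt_dist f_col xy (dist_le_edge exy)).
by case: f_col => /(_ x); lia.
Qed.

Lemma packing_2coloring_path4F z w x y :
  e z w -> e w x -> e x y -> z != x -> w != y -> ~ packing_coloring e 2 f.
Proof.
move=> ezw ewx exy zx wy f_col; have [f_range _] := f_col.
have dzx := dist_le_cons ezw (dist_le_edge ewx).
have dwy := dist_le_cons ewx (dist_le_edge exy).
have := packing_coloring_adj_neq f_col ezw; have := packing_coloring_adj_neq f_col ewx.
have := packing_coloring_adj_neq f_col exy.
have := packing_coloring_lt_dist f_col zx dzx; have := packing_coloring_lt_dist f_col wy dwy.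
have := f_range z; have := f_range w; have := f_range x; have := f_range y.
lia.
Qed.

Lemma packing_3coloring_deg3_neq1 x y1 y2 y3 :
  packing_coloring e 3 f -> e x y1 -> e x y2 -> e x y3 -> uniq [:: y1; y2; y3] ->
  f x != 1.
Proof.
move=> f_col exy1 exy2 exy3; rewrite /= !inE => /and3P [/norP [y12 y13] y23 _].
have [f_range _] := f_col.
have near y y' : e x y -> e x y' -> y != y' -> f y = f y' -> f y < 2.
  move=> exy exy' yy'; apply: packing_coloring_lt_dist f_col yy' _.
  by apply: dist_le_cons (dist_le_edge exy'); rewrite e_sym.
have := near _ _ exy1 exy2 y12; have := near _ _ exy1 exy3 y13.
have := near _ _ exy2 exy3 y23.
have := packing_coloring_adj_neq f_col exy1; have := packing_coloring_adj_neq f_col exy2.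
have := packing_coloring_adj_neq f_col exy3.
have := f_range y1; have := f_range y2; have := f_range y3.
lia.
Qed.

Lemma packing_3coloring_path4_eq2 z w x y :
  packing_coloring e 3 f -> e z w -> e w x -> e x y -> z != x -> z != y -> w != y ->
  f x != 1 -> f y != 1 -> f y = 2.
Proof.
move=> f_col ezw ewx exy zx zy wy.
have [f_range _] := f_col.
have dwy := dist_le_cons ewx (dist_le_edge exy).
have dzx := dist_le_cons ezw (dist_le_edge ewx).
have dzy := dist_le_cons ezw dwy.
have := packing_coloring_adj_neq f_col ezw; have := packing_coloring_adj_neq f_col ewx.
have := packing_coloring_adj_neq f_col exy.
have := packing_coloring_lt_dist f_col wy dwy; have := packing_coloring_lt_dist f_col zx dzx.
have := packing_coloring_lt_dist f_col zy dzy.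
have := f_range z; have := f_range w; have := f_range x; have := f_range y.
lia.
Qed.

End PackingColoring.

Lemma sierpinski_adj_sym k n (G : rel 'I_k) :
  symmetric G -> symmetric (@sierpinski_adj k n G).
Proof.
move=> G_sym; suff imp u v : @sierpinski_adj k n G u v -> @sierpinski_adj k n G v u.
  by move=> u v; apply/idP/idP; apply: imp.
case/existsP => i /and4P [pre neq adj post]; apply/existsP; exists i.
rewrite eq_sym neq -G_sym adj /=; apply/andP; split; apply/forallP => j.
  by rewrite eq_sym; apply: (forallP pre).
by rewrite andbC; apply: (forallP post).
Qed.

Lemma sierpinski_adj_irr k n (G : rel 'I_k) : irreflexive (@sierpinski_adj k n G).
Proof. by move=> u; apply/existsP => -[i]; rewrite eqxx andbF. Qed.

Lemma path_graph_sym k : symmetric (@path_graph k).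
Proof. by move=> i j; rewrite /path_graph orbC. Qed.

Lemma forall_ord2 (P : pred 'I_2) : [forall i, P i] = P ord0 && P ord_max.
Proof.
apply/forallP/andP => [|[P0 P1]]; first by move=> P_all; rewrite !P_all.
case=> -[|[|//]] lti; [rewrite (_ : Ordinal lti = ord0) | rewrite (_ : Ordinal lti = ord_max)];
  by [|apply: val_inj].
Qed.

Lemma exists_ord2 (P : pred 'I_2) : [exists i, P i] = P ord0 || P ord_max.
Proof. by apply: negb_inj; rewrite negb_or negb_exists forall_ord2. Qed.

Local Notation S2P k := (@sierpinski_adj k 2 (@path_graph k)).

(* The pair (a, b) stands for the word ab; sp_adj and sp_dist are the
   adjacency and the tree distance of S^2_{P_k} on letters below k.  A shortest
   walk goes along copy a to its bridge vertex (a, a +- 1), crosses each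
   intermediate copy at cost 3, and goes along copy c. *)
Definition sp_adj (a b c d : nat) : bool :=
  ((a == c) && ((b.+1 == d) || (d.+1 == b))) ||
  [&& (a.+1 == c) || (c.+1 == a), b == c & d == a].

Lemma sierpinski2_pathE k (u v : {ffun 'I_2 -> 'I_k}) :
  S2P k u v = sp_adj (u ord0) (u ord_max) (v ord0) (v ord_max).
Proof.
rewrite /sierpinski_adj exists_ord2 !forall_ord2 /= /sp_adj /path_graph.
by rewrite -!val_eqE /=; lia.
Qed.

Lemma ffun2_eqE (T : eqType) (u v : {ffun 'I_2 -> T}) :
  (u == v) = (u ord0 == v ord0) && (u ord_max == v ord_max).
Proof.
by rewrite -(forall_ord2 (fun i => u i == v i)); apply/eqP/forallP => [->|uv] //;
  apply/ffunP => i; apply/eqP.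
Qed.

Definition absd (m n : nat) : nat := (m - n) + (n - m).

Definition sp_dist (a b c d : nat) : nat :=
  if a == c then absd b d
  else if a < c then absd b a.+1 + (3 * (c - a) - 2) + absd d.+1 c
  else absd d c.+1 + (3 * (a - c) - 2) + absd b.+1 a.

Lemma sp_dist_adj_leS a b c d c' d' :
  sp_adj c d c' d' -> sp_dist a b c' d' <= (sp_dist a b c d).+1.
Proof. by rewrite /sp_adj /sp_dist /absd; case: (ltngtP a c); case: (ltngtP a c'); lia. Qed.

Lemma sp_dist_le_dist k i (u v : {ffun 'I_2 -> 'I_k}) :
  dist_le (S2P k) i u v -> sp_dist (u ord0) (u ord_max) (v ord0) (v ord_max) <= i.
Proof.
case=> p [walk <- size_p]; apply: leq_trans _ size_p.
elim/last_ind: p walk => [|p w IH]; first by rewrite /sp_dist eqxx /absd subnn.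
rewrite rcons_path last_rcons size_rcons => /andP [/IH le_p].
by rewrite sierpinski2_pathE => /(sp_dist_adj_leS (u ord0) (u ord_max)); lia.
Qed.

Definition packing_sep (g : nat -> nat -> nat) (a b c d : nat) : bool :=
  [|| (a == c) && (b == d), g a b != g c d | g a b < sp_dist a b c d].

Lemma sierpinski2_path_colorable k c (g : nat -> nat -> nat) :
  (forall a b, 1 <= g a b <= c) ->
  (forall a b a' b', a < k -> b < k -> a' < k -> b' < k -> packing_sep g a b a' b') ->
  packing_colorable (S2P k) c.
Proof.
move=> g_range g_sep.
exists (fun u : {ffun 'I_2 -> 'I_k} => g (u ord0) (u ord_max)); split=> // u v uv guv.
move/sp_dist_le_dist; apply/negP; rewrite -ltnNge.
have := g_sep _ _ _ _ (ltn_ord (u ord0)) (ltn_ord (u ord_max)) (ltn_ord (v ord0))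
  (ltn_ord (v ord_max)).
by move: uv; rewrite /packing_sep guv eqxx ffun2_eqE -!val_eqE => /negPf ->.
Qed.

(* Along each copy, 1, 2, 1, 3, 1, 2, 1, 3, ... is a packing colouring of the
   path; the bridges only bring (a-1, a) and (a+1, a) within distance 2 of
   (a, a), which has the same colour when a is odd.  Recolouring these (a, a)
   with 4 is safe since any two of them are at distance at least 5. *)
Definition col4 (a b : nat) : nat :=
  if (a == b) && odd a then 4 else if odd b then (if b %% 4 == 1 then 2 else 3) else 1.

Lemma col4_sep a b c d : packing_sep col4 a b c d.
Proof. by rewrite /packing_sep /col4 /sp_dist /absd; repeat case: ifP; lia. Qed.

(* On [3] x [3], col4 never uses colour 3. *)
Definition col3 (a b : nat) : nat := minn (col4 a b) 3.

Lemma col3_sep a b c d : a < 3 -> b < 3 -> c < 3 -> d < 3 -> packing_sep col3 a b c d.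
Proof.
by case: a => [|[|[|//]]]; case: b => [|[|[|//]]]; case: c => [|[|[|//]]];
  case: d => [|[|[|//]]].
Qed.

Definition word2 n (a b : nat) : {ffun 'I_2 -> 'I_n.+1} :=
  [ffun i => inord (if i == ord0 then a else b)].

Lemma word2_adj n a b c d : a <= n -> b <= n -> c <= n -> d <= n ->
  S2P n.+1 (word2 n a b) (word2 n c d) = sp_adj a b c d.
Proof. by move=> *; rewrite sierpinski2_pathE !ffunE /= !inordK. Qed.

Lemma word2_eqE n a b c d : a <= n -> b <= n -> c <= n -> d <= n ->
  (word2 n a b == word2 n c d) = (a == c) && (b == d).
Proof. by move=> *; rewrite ffun2_eqE !ffunE -!val_eqE /= !inordK. Qed.

Lemma sierpinski2_path_not_2colorable k : 3 <= k -> ~ packing_colorable (S2P k) 2.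
Proof.
case: k => [|[|[|n]]] // _ [f f_col]; set v := word2 n.+2.
by apply: (packing_2coloring_path4F (@sierpinski_adj_irr _ _ _)
  (z := v 0 2) (w := v 0 1) (x := v 1 0) (y := v 1 1) _ _ _ _ _ f_col);
  rewrite ?word2_adj ?word2_eqE.
Qed.

Lemma sierpinski2_path_not_3colorable k : 4 <= k -> ~ packing_colorable (S2P k) 3.
Proof.
case: k => [|[|[|[|n]]]] // _ [f f_col]; set v := word2 n.+3.
have irr := @sierpinski_adj_irr _ 2 (@path_graph n.+4).
have sym := sierpinski_adj_sym (n := 2) (@path_graph_sym n.+4).
have f12_neq1 : f (v 1 2) != 1.
  by apply: (packing_3coloring_deg3_neq1 irr sym
    (y1 := v 1 1) (y2 := v 1 3) (y3 := v 2 1) f_col);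
    rewrite ?word2_adj ?cons_uniq ?inE ?word2_eqE.
have f21_neq1 : f (v 2 1) != 1.
  by apply: (packing_3coloring_deg3_neq1 irr sym
    (y1 := v 2 0) (y2 := v 2 2) (y3 := v 1 2) f_col);
    rewrite ?word2_adj ?cons_uniq ?inE ?word2_eqE.
have f21_eq2 : f (v 2 1) = 2.
  by apply: (packing_3coloring_path4_eq2 irr (z := v 1 0) (w := v 1 1) (x := v 1 2) f_col);
    rewrite ?word2_adj ?word2_eqE.
have f12_eq2 : f (v 1 2) = 2.
  by apply: (packing_3coloring_path4_eq2 irr (z := v 2 3) (w := v 2 2) (x := v 2 1) f_col);
    rewrite ?word2_adj ?word2_eqE.
have := packing_coloring_adj_neq irr f_col (x := v 1 2) (y := v 2 1).
by rewrite word2_adj // f12_eq2 f21_eq2 => /(_ isT).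
Qed.

Lemma sierpinski2_path_4colorable k : packing_colorable (S2P k) 4.
Proof.
apply: (sierpinski2_path_colorable (g := col4)) => [a b|a b c d _ _ _ _].
  by rewrite /col4; repeat case: ifP.
exact: col4_sep.
Qed.

Lemma sierpinski2_path3_3colorable : packing_colorable (S2P 3) 3.
Proof.
apply: (sierpinski2_path_colorable (g := col3)) => [a b|]; last exact: col3_sep.
by rewrite /col3 /col4; repeat case: ifP.
Qed.

Theorem proposition3 (k : nat) (hk : 3 <= k) :
  packing_chromatic_number_is (@sierpinski_adj k 2 (@path_graph k))
    (if k == 3 then 3 else 4).
Proof.
case: eqP => [->|k_neq3]; apply: packing_chromatic_number_is_intro.
- exact: sierpinski2_path3_3colorable.
- exact: sierpinski2_path_not_2colorable.
- exact: sierpinski2_path_4colorable.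
- by apply: sierpinski2_path_not_3colorable; lia.
Qed.
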